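(* Let $y(t)$ solve $\dot y_k=v_k(Q(y))$, $k\in\mathcal{N}$, and let $x(t)=Q(y(t))$. If $p_k\in\mathcal{X}_k$ is dominated, or even iteratively dominated, then $p_k$ becomes extinct along $x(t)$, i.e. $\min\{x_{k\alpha}(t):\alpha\in\operatorname{supp}(p_k)\}\to0$ as $t\to\infty$.
   Context: Setting: a finite game with players $\mathcal{N}=\{1,\dots,N\}$, finite action sets $\mathcal{A}_k$, mixed strategies $\mathcal{X}_k=\Delta(\mathcal{A}_k)$, $\mathcal{X}=\prod_k\mathcal{X}_k$, multilinear expected payoffs $u_k$, payoff vectors $v_k(x)=(u_k(\alpha;x_{-k}))_{\alpha\in\mathcal{A}_k}$. Each player has a penalty function $h_k$ on $\mathcal{X}_k$ (continuous, $C^\infty$ on the relative interior of each face, strongly convex: $h(tx_1+(1-t)x_2)\le th(x_1)+(1-t)h(x_2)-\tfrac12Kt(1-t)\|x_1-x_2\|^2$ for some $K>0$), with choice map $Q_k(y_k)=\arg\max_{x_k\in\mathcal{X}_k}\{\langle y_k,x_k\rangle-h_k(x_k)\}$; $Q=(Q_k)_k$. $p_k$ is dominated by $p_k'$ if $u_k(p_k;x_{-k})<u_k(p_k';x_{-k})$ for all $x_{-k}\in\prod_{\ell\ne k}\mathcal{X}_\ell$. Iterated elimination: $\mathcal{A}_k^0=\mathcal{A}_k$; given $\mathcal{A}^r_\ell$, let $\mathcal{X}_\ell^r=\Delta(\mathcal{A}_\ell^r)$ and $\mathcal{A}_k^{r+1}$ be the actions in $\mathcal{A}_k^r$ not dominated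 (by some element of $\mathcal{X}_k^r$) against all $x_{-k}\in\prod_{\ell\ne k}\mathcal{X}_\ell^r$. $p_k$ is iteratively dominated if for some $r\ge0$, $p_k\in\mathcal{X}_k^r$ and there is $p_k'\in\mathcal{X}_k^r$ with $u_k(p_k';x_{-k})>u_k(p_k;x_{-k})$ for all $x_{-k}\in\prod_{\ell\ne k}\mathcal{X}_\ell^r$. *)

From HB Require Import structures.
From mathcomp Require Import all_boot all_order all_algebra.
From mathcomp Require Import all_classical all_reals all_analysis.
Set Implicit Arguments. Unset Strict Implicit. Unset Printing Implicit Defensive.
Import Order.TTheory GRing.Theory Num.Theory.
Import numFieldNormedType.Exports.
Local Open Scope classical_set_scope.
Local Open Scope ring_scope.

Section Game.
Variable R : realType.

Definition mixed n (z : 'rV[R]_n) : Prop :=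
  (forall a, 0 <= z 0 a) /\ \sum_(a < n) z 0 a = 1.

Definition mixed_on n (A : set 'I_n) (z : 'rV[R]_n) : Prop :=
  mixed z /\ (forall a, z 0 a != 0 -> A a).

Definition pairing n (y z : 'rV[R]_n) : R := \sum_(a < n) y 0 a * z 0 a.

Variables (N : nat) (n : 'I_N -> nat).

Definition profile := forall k : 'I_N, 'rV[R]_(n k).
Definition pure_profile := {dffun forall l : 'I_N, 'I_(n l)}.

(* u_k(p_k ; x_{-k}) : multilinear expected payoff of player k playing p
   against the opponents' components of x (x k is ignored) *)
Definition udev (U : forall k : 'I_N, pure_profile -> R) (k : 'I_N)
  (p : 'rV[R]_(n k)) (x : profile) : R :=
  \sum_(a : pure_profile)
     U k a * p 0 (a k) * \prod_(l < N | l != k) x l 0 (a l).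

Definition upay (U : forall k : 'I_N, pure_profile -> R) (k : 'I_N)
  (x : profile) : R := udev U (x k) x.

Definition payv (U : forall k : 'I_N, pure_profile -> R) (k : 'I_N)
  (x : profile) : 'rV[R]_(n k) :=
  \row_(a < n k) udev U (delta_mx 0 a) x.

Fixpoint surv (U : forall k : 'I_N, pure_profile -> R) (r : nat)
  : forall k : 'I_N, set 'I_(n k) :=
  match r with
  | 0 => fun k => setT
  | r'.+1 => fun k =>
      let S := surv U r' in
      [set a : 'I_(n k) | S k a /\
        ~ (exists p' : 'rV[R]_(n k), mixed_on (S k) p' /\
             forall x : profile,
               (forall l, l != k -> mixed_on (S l) (x l)) ->
               udev U (delta_mx 0 a) x < udev U p' x)]
  end.

Definition dominated (U : forall k : 'I_N, pure_profile -> R) (k : 'I_N)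
  (p : 'rV[R]_(n k)) : Prop :=
  mixed p /\
  exists p' : 'rV[R]_(n k), mixed p' /\
    forall x : profile, (forall l, l != k -> mixed (x l)) ->
      udev U p x < udev U p' x.

Definition iter_dominated (U : forall k : 'I_N, pure_profile -> R)
  (k : 'I_N) (p : 'rV[R]_(n k)) : Prop :=
  exists r : nat, mixed_on (@surv U r k) p /\
    exists p' : 'rV[R]_(n k), mixed_on (@surv U r k) p' /\
      forall x : profile, (forall l, l != k -> mixed_on (@surv U r l) (x l)) ->
        udev U p x < udev U p' x.

End Game.
Arguments surv {R N n} U r k _.

Section Penalty.
Variable R : realType.

Fixpoint iter_dd n (f : 'rV[R]_n -> R) (ds : seq 'rV[R]_n) : 'rV[R]_n -> R :=
  match ds with
  | [::] => f
  | d :: ds' => fun z => 'D_d (iter_dd f ds') z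
  end.

Definition face_relint n (S : {set 'I_n}) : set 'rV[R]_n :=
  [set z | mixed z /\ forall a, (0 < z 0 a) <-> (a \in S)].

Definition face_tangent n (S : {set 'I_n}) : set 'rV[R]_n :=
  [set d | (forall a, a \notin S -> d 0 a = 0) /\ \sum_(a < n) d 0 a = 0].

(* h is C^oo on the relative interior of each face: all iterated directional
   derivatives along the face exist there and are continuous there *)
Definition smooth_on_faces n (h : 'rV[R]_n -> R) : Prop :=
  forall (S : {set 'I_n}) (ds : seq 'rV[R]_n),
    (forall d, d \in ds -> face_tangent S d) ->
    (forall z d, face_relint S z -> face_tangent S d ->
        derivable (iter_dd h ds) z d) /\
    {within face_relint S, continuous (iter_dd h ds)}.

Definition strongly_convex_on_simplex n (h : 'rV[R]_n -> R) : Prop :=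
  exists K : R, 0 < K /\
    forall x1 x2 : 'rV[R]_n, mixed x1 -> mixed x2 ->
    forall t : R, 0 <= t <= 1 ->
      h (t *: x1 + (1 - t) *: x2) <=
        t * h x1 + (1 - t) * h x2 - 2^-1 * K * t * (1 - t) * `|x1 - x2| ^+ 2.

Definition penalty n (h : 'rV[R]_n -> R) : Prop :=
  {within [set z | mixed z], continuous h} /\ smooth_on_faces h /\
  strongly_convex_on_simplex h.

Definition is_choice n (h : 'rV[R]_n -> R) (y z : 'rV[R]_n) : Prop :=
  mixed z /\
  forall z', mixed z' -> pairing y z' - h z' <= pairing y z - h z.

(* min { z_alpha : alpha in supp p } as an extended real (+oo on empty set) *)
Definition supp_min n (p z : 'rV[R]_n) : \bar R :=
  \big[Order.min/+oo%E]_(a < n | p 0 a != 0) (z 0 a)%:E.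

End Penalty.

From HB Require Import structures.
From mathcomp Require Import all_boot all_order all_algebra.
From mathcomp Require Import all_classical all_reals all_analysis.
From mathcomp Require Import lra ring.
Import Order.TTheory GRing.Theory Num.Theory.
Import numFieldNormedType.Exports.
Local Open Scope classical_set_scope.
Local Open Scope ring_scope.

(* If p' strictly beats p against every opponent profile built from actions
   surviving r rounds, and the non-surviving actions die out along x(t), then
   u_k(p' - p; x(t)) is eventually at least some d > 0, so the score difference
   <y_k(t), p' - p> grows at least linearly.  On the other hand, perturbing
   Q_k(y) away from p inside the simplex shows that Q_k can keep every action
   of supp p above e only while <y_k, p' - p> stays below a constant depending
   on e and the range of h_k.  Induction on r covers iterated dominance. *)

Lemma sum_dffun_prod {R : comNzRingType} {I : finType} {T_ : I -> finType}
  (F : forall i, T_ i -> R) :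
  \sum_(b : {dffun forall i : I, T_ i}) \prod_i F i (b i) =
  \prod_i \sum_(j : T_ i) F i j.
Proof.
rewrite (reindex (@dffun_of_fprod I T_)); last first.
  by apply: onW_bij; exact: dffun_of_fprod_bij.
transitivity (\sum_(t : fprod T_) \prod_(i in I) [ffun j => F i j] (t i) : R).
  by apply: eq_bigr => t _; apply: eq_bigr => i _; rewrite !ffunE.
rewrite (@big_fprod R 0 1 *%R +%R I T_ (fun i => [ffun j => F i j])).
rewrite -(bigA_distr_big_dep (fun i j => tagged_with T_ i j)
                             (fun i j => untag 0 [ffun j => F i j] j)).
apply: eq_bigr => i _; rewrite (big_tag _ i); apply: eq_bigr => j _.
by congr (untag _ _ j); apply: boolp.funext => z; rewrite ffunE.
Qed.

Section Simplex.
Context {R : realType} {m : nat}.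

Lemma delta_entry (i j : 'I_m) : (delta_mx 0 i : 'rV[R]_m) 0 j = (i == j)%:R.
Proof. by rewrite mxE eqxx eq_sym. Qed.

Lemma mixed_delta (a : 'I_m) : mixed (delta_mx 0 a : 'rV[R]_m).
Proof.
split => [b|]; first by rewrite mxE ler0n.
rewrite (bigD1 a) //= big1 ?addr0; first by rewrite mxE !eqxx.
by move=> b ba; rewrite mxE (negbTE ba) andbF.
Qed.

Lemma mixed_on_delta (A : set 'I_m) (a : 'I_m) :
  A a -> mixed_on A (delta_mx 0 a : 'rV[R]_m).
Proof.
move=> Aa; split; first exact: mixed_delta.
by move=> b; rewrite delta_entry; case: (a =P b) => [<- //|]; rewrite eqxx.
Qed.

Lemma mixed_le1 (a : 'I_m) (z : 'rV[R]_m) : mixed z -> z 0 a <= 1.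
Proof. by case=> z_ge0 <-; rewrite (bigD1 a) //= lerDl sumr_ge0. Qed.

Lemma mixed_closed : closed [set z : 'rV[R]_m | mixed z].
Proof.
have -> : [set z : 'rV[R]_m | mixed z] =
   (\bigcap_(a in [set: 'I_m]) ((fun z : 'rV[R]_m => z 0 a) @^-1` [set x | 0 <= x]))
   `&` ((fun z : 'rV[R]_m => \sum_(a < m) z 0 a) @^-1` [set x | x = 1]).
  by apply/seteqP; split => z /= [z_ge0 z1]; split => // a *; exact: z_ge0.
have coord_cont a : continuous (fun z : 'rV[R]_m => z 0 a) by exact: coord_continuous.
apply: closedI.
  apply: closed_bigI => a _; apply: preimage_closed; last exact: closed_ge.
  by move=> z _; exact: coord_cont.
apply: preimage_closed; last exact: closed_eq.
have sum_cont (r : seq 'I_m) : continuous (fun z : 'rV[R]_m => \sum_(a <- r) z 0 a).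
  elim: r => [|a r IH] z.
    by under [fun _ => _]boolp.funext do rewrite big_nil; exact: cst_continuous.
  under [fun _ => _]boolp.funext do rewrite big_cons.
  exact: (continuousD (coord_cont a z) (IH z)).
by move=> z _; exact: sum_cont.
Qed.

Lemma mixed_compact : compact [set z : 'rV[R]_m | mixed z].
Proof.
apply: (@subclosed_compact _ _
  [set v : 'rV[R]_m | forall i, `[(0:R), 1]%classic (v 0 i)]).
- exact: mixed_closed.
- by apply: (@rV_compact _ _ (fun=> `[(0:R), 1]%classic)) => _; exact: segment_compact.
move=> z mz i /=; rewrite in_itv /=; apply/andP; split; first by case: mz.
exact: mixed_le1.
Qed.

Lemma penalty_bounded (h : 'rV[R]_m -> R) : (0 < m)%N -> penalty h ->
  exists M, forall z, mixed z -> `|h z| <= M.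
Proof.
move=> m_gt0 [h_cont _].
have ne : [set z : 'rV[R]_m | mixed z] !=set0.
  by exists (delta_mx 0 (Ordinal m_gt0)); exact: mixed_delta.
have [zmax _ hmax] := EVT_max_rV ne mixed_compact h_cont.
have [zmin _ hmin] := EVT_min_rV ne mixed_compact h_cont.
exists (`|h zmax| + `|h zmin|) => z mz.
have zA : z \in [set z | mixed z] by rewrite inE.
have := hmax z zA; have := hmin z zA; have := ler_norm (h zmax).
have := ler_norm (- h zmin); have := normr_ge0 (h zmax); have := normr_ge0 (h zmin).
rewrite normrN ler_norml => ? ? ? ? ? ?; apply/andP; split; lra.
Qed.

End Simplex.

Section Pairing.
Context {R : realType} {m : nat}.

Lemma pairingB (w a b : 'rV[R]_m) : pairing w (a - b) = pairing w a - pairing w b.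
Proof. by rewrite /pairing -sumrB; apply: eq_bigr => i _; rewrite !mxE; ring. Qed.

Lemma is_derive_pairing (q : 'rV[R]_m) {Y : R -> 'rV[R]_m} {Y' : 'rV[R]_m} {t : R} :
  is_derive t 1 Y Y' -> is_derive t 1 (fun s => pairing (Y s) q) (pairing Y' q).
Proof.
move=> dY; have Y_derivable : derivable Y t 1 by case: dY.
have dY_entry a : is_derive t 1 (fun s => Y s 0 a) (Y' 0 a).
  apply: DeriveDef; first by move/derivable_mxP: Y_derivable; apply.
  by have := derive_mx Y_derivable; rewrite derive_val => ->; rewrite mxE.
have -> : (fun s => pairing (Y s) q) = \sum_(a < m) (q 0 a \*: fun s => Y s 0 a).
  by apply: boolp.funext => s; rewrite fct_sumE; apply: eq_bigr => a _; rewrite /= mulrC.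
rewrite /pairing; apply: is_derive_sum => a; rewrite mulrC; exact: is_deriveZ.
Qed.

(* The witness is x pushed away from p by e: it stays in the simplex because
   x puts mass at least e on the support of p. *)
Lemma choice_pairing_bound {h : 'rV[R]_m -> R} {w x p p' : 'rV[R]_m} {M e : R} :
  is_choice h w x -> mixed p -> mixed p' -> (forall z, mixed z -> `|h z| <= M) ->
  0 < e -> e <= 1 -> (forall a, p 0 a != 0 -> e <= x 0 a) ->
  pairing w p' - pairing w p <= 2 * M * (1 + e^-1).
Proof.
move=> [mx x_opt] mp mp' hM e_gt0 e_le1 x_ge.
pose z := x + e *: (x - p).
have mz : mixed z.
  split=> [a|].
    rewrite !mxE; have [pa0|pa] := eqVneq (p 0 a) 0.
      by rewrite pa0; have := mx.1 a; nra.
    by have := x_ge a pa; have := mixed_le1 a p mp; have := mp.1 a; nra.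
  under eq_bigr do rewrite !mxE.
  by rewrite big_split /= -mulr_sumr sumrB mx.2 mp.2; lra.
have pairing_z : pairing w z = pairing w x + e * (pairing w x - pairing w p).
  rewrite /pairing -sumrB mulr_sumr -big_split /=.
  by apply: eq_bigr => a _; rewrite !mxE; ring.
have from_z : e * (pairing w x - pairing w p) <= 2 * M.
  have := x_opt z mz; have := hM z mz; have := hM x mx.
  rewrite pairing_z !ler_norml => /andP[? ?] /andP[? ?]; lra.
have from_p' : pairing w p' - pairing w x <= 2 * M.
  have := x_opt p' mp'; have := hM p' mp'; have := hM x mx.
  rewrite !ler_norml => /andP[? ?] /andP[? ?]; lra.
have : pairing w x - pairing w p <= 2 * M / e by rewrite ler_pdivlMr // mulrC.
rewrite mulrDr mulr1; lra.
Qed.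

End Pairing.

Lemma derivative_bounded_below_diverges {R : realType} {f f' : R -> R} {d : R} :
  (forall t : R, 0 < t -> is_derive t 1 f (f' t)) -> 0 < d ->
  (\forall t \near +oo, d <= f' t) -> forall B, \forall t \near +oo, B < f t.
Proof.
move=> df d_gt0 [T0 [_ f'_ge]] B.
pose T := Num.max T0 0 + 1.
have : T0 <= Num.max T0 0 /\ 0 <= Num.max T0 0 by rewrite !le_max !lexx orbT.
move=> [T0_le T_ge0]; have T0T : T0 < T by rewrite /T; lra.
have growth t : T <= t -> f T + d * (t - T) <= f t.
  move=> Tt; have [c] : exists2 c, c \in `[T, t]%R & f t - f T = f' c * (t - T).
    apply: MVT_segment => //.
      by move=> s; rewrite in_itv /= => /andP [Ts _]; apply: df; rewrite /T in Ts *; lra.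
    apply: continuous_in_subspaceT => s; rewrite inE /= in_itv /= => /andP [Ts _].
    have s_gt0 : 0 < s by rewrite /T in Ts *; lra.
    by have [/derivable1_diffP/differentiable_continuous] := df s s_gt0.
  rewrite in_itv /= => /andP [Tc _] fE.
  have : d * (t - T) <= f' c * (t - T) by apply: ler_wpM2r; [lra | apply: f'_ge; lra].
  lra.
exists (T + `|B - f T| / d); split; first exact: num_real.
move=> t Tt; have normB := ler_norm (B - f T).
have ratio_ge0 : 0 <= `|B - f T| / d by rewrite divr_ge0 // ltW.
have : `|B - f T| < d * (t - T) by rewrite mulrC -ltr_pdivrMr //; lra.
have := growth t ltac:(lra); lra.
Qed.

Section PayoffDecomposition.
Context {R : realType} {N : nat} {n : 'I_N -> nat}.
Variable U : forall k : 'I_N, pure_profile n -> R.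

Lemma udevB k (p p' : 'rV[R]_(n k)) x :
  udev U (p' - p) x = udev U p' x - udev U p x.
Proof. by rewrite /udev -sumrB; apply: eq_bigr => b _; rewrite !mxE; ring. Qed.

Lemma pairing_payv k (x : profile R n) (q : 'rV[R]_(n k)) :
  pairing (payv U k x) q = udev U q x.
Proof.
rewrite /pairing /payv /udev.
under eq_bigr do rewrite mxE mulr_suml.
rewrite exchange_big /=; apply: eq_bigr => b _.
rewrite (bigD1 (b k)) //= [X in _ + X]big1 ?addr0.
  by rewrite delta_entry eqxx mulr1n; ring.
by move=> a ab; rewrite delta_entry (negbTE ab) mulr0n; ring.
Qed.

Definition pure_mixed (b : pure_profile n) : profile R n := fun l => delta_mx 0 (b l).

Variable k : 'I_N.
Hypothesis nk_gt0 : (0 < n k)%N.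

(* [udev U _ x] ignores [x k]; putting the uniform distribution there makes
   the weights of the pure profiles sum to one. *)
Definition opp_weight (x : profile R n) {l} (i : 'I_(n l)) : R :=
  if l == k then (n k)%:R^-1 else x l 0 i.

Definition profile_weight (x : profile R n) (b : pure_profile n) : R :=
  \prod_(l : 'I_N) opp_weight x (b l).

Definition outside_mass (S : forall l, pred 'I_(n l)) (x : profile R n) : R :=
  \sum_(l : 'I_N | l != k) \sum_i x l 0 i * (~~ S l i)%:R.

Lemma sum_opp_weight_k (x : profile R n) : \sum_(i < n k) opp_weight x i = 1.
Proof.
rewrite /opp_weight eqxx sumr_const card_ord -(mulr_natr ((n k)%:R^-1)) mulVf //.
by rewrite pnatr_eq0 -lt0n.
Qed.

Lemma sum_opp_weight (x : profile R n) (l : 'I_N) :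
  (forall l, l != k -> mixed (x l)) -> \sum_(i < n l) opp_weight x i = 1.
Proof.
move=> mx; have [->|lk] := eqVneq l k; first exact: sum_opp_weight_k.
by rewrite -(mx l lk).2; apply: eq_bigr => i _; rewrite /opp_weight (negbTE lk).
Qed.

Lemma udev_pure_decomp (q : 'rV[R]_(n k)) (x : profile R n) :
  udev U q x = \sum_b profile_weight x b * udev U q (pure_mixed b).
Proof.
rewrite /udev; under [RHS]eq_bigr do rewrite mulr_sumr.
rewrite exchange_big /=; apply: eq_bigr => a _.
under [RHS]eq_bigr do rewrite mulrCA.
rewrite -mulr_sumr; congr (_ * _); symmetry.
transitivity (\sum_(b : pure_profile n) \prod_l
   (opp_weight x (b l) * (if l == k then 1 else (b l == a l)%:R))).
  apply: eq_bigr => b _; rewrite big_split /= /profile_weight; congr (_ * _).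
  rewrite [LHS]big_mkcond; apply: eq_bigr => l _; rewrite /pure_mixed delta_entry.
  by case: (l == k).
rewrite (sum_dffun_prod (fun l i => opp_weight x i *
                                    (if l == k then 1 else (i == a l)%:R))).
rewrite (bigD1 k) //=; under eq_bigr do rewrite eqxx mulr1.
rewrite sum_opp_weight_k mul1r; apply: eq_bigr => l lk.
rewrite (bigD1 (a l)) //= big1 ?addr0.
  by rewrite /opp_weight (negbTE lk) eqxx mulr1.
by move=> i ia; rewrite (negbTE lk) (negbTE ia) mulr0.
Qed.

Lemma sum_profile_weight (x : profile R n) :
  (forall l, l != k -> mixed (x l)) -> \sum_b profile_weight x b = 1.
Proof.
move=> mx; rewrite (sum_dffun_prod (fun l => @opp_weight x l)).
by rewrite big1 // => l _; exact: sum_opp_weight.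
Qed.

Lemma profile_weight_ge0 (x : profile R n) b :
  (forall l, l != k -> mixed (x l)) -> 0 <= profile_weight x b.
Proof.
move=> mx; apply: prodr_ge0 => l _; rewrite /opp_weight.
by case: eqP => [_|/eqP lk]; [rewrite invr_ge0 ler0n | exact: (mx l lk).1].
Qed.

Lemma profile_weight_marginal (x : profile R n) (f : forall l, 'I_(n l) -> R) l0 :
  l0 != k -> (forall l, l != k -> mixed (x l)) ->
  \sum_b profile_weight x b * f l0 (b l0) = \sum_i x l0 0 i * f l0 i.
Proof.
move=> l0k mx.
transitivity (\sum_(b : pure_profile n) \prod_l
   (opp_weight x (b l) * (if l == l0 then f l (b l) else 1))).
  apply: eq_bigr => b _; rewrite big_split /= /profile_weight; congr (_ * _).
  by rewrite (bigD1 l0) //= eqxx big1 ?mulr1 // => l /negbTE ->.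
rewrite (sum_dffun_prod (fun l i => opp_weight x i * (if l == l0 then f l i else 1))).
rewrite (bigD1 l0) //= [X in _ * X]big1 ?mulr1.
  by apply: eq_bigr => i _; rewrite eqxx /opp_weight (negbTE l0k).
move=> l /negbTE ->; under eq_bigr do rewrite mulr1; exact: sum_opp_weight.
Qed.

(* Average the pure-profile bounds: a profile with some opponent outside [S]
   contributes at least [- C >= d - (d + C) * #(opponents outside S)]. *)
Lemma udev_ge_outside_mass (q : 'rV[R]_(n k)) (x : profile R n)
    (S : forall l, pred 'I_(n l)) (d C : R) :
  0 <= d -> 0 <= C -> (forall l, l != k -> mixed (x l)) ->
  (forall b : pure_profile n, (forall l, l != k -> S l (b l)) ->
     d <= udev U q (pure_mixed b)) ->
  (forall b : pure_profile n, - C <= udev U q (pure_mixed b)) ->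
  d - (d + C) * outside_mass S x <= udev U q x.
Proof.
move=> d_ge0 C_ge0 mx good bnd.
have -> : d - (d + C) * outside_mass S x = \sum_b profile_weight x b *
          (d - (d + C) * \sum_(l | l != k) (~~ S l (b l))%:R).
  under [RHS]eq_bigr do rewrite mulrBr.
  rewrite sumrB -mulr_suml sum_profile_weight // mul1r; congr (_ - _).
  under [RHS]eq_bigr do rewrite mulrCA mulr_sumr.
  rewrite -mulr_sumr exchange_big /=; congr (_ * _).
  apply: eq_bigr => l lk.
  by rewrite (profile_weight_marginal x (fun l i => (~~ S l i)%:R)).
rewrite udev_pure_decomp; apply: ler_sum => b _.
apply: ler_wpM2l; first exact: profile_weight_ge0.
have [all_in|] := boolP [forall l, (l != k) ==> S l (b l)].
  have Sb l : l != k -> S l (b l) by move=> lk; have := forallP all_in l; rewrite lk.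
  by rewrite big1 ?mulr0 ?subr0 => [|l /Sb ->]; [exact: good|].
rewrite negb_forall => /existsP [l0]; rewrite negb_imply => /andP [l0k Sl0].
apply: le_trans (bnd b).
have : 1 <= \sum_(l | l != k) (~~ S l (b l))%:R :> R.
  by rewrite (bigD1 l0) //= Sl0 lerDl; apply: sumr_ge0 => *; exact: ler0n.
move=> /(ler_wpM2l (addr_ge0 d_ge0 C_ge0)); rewrite mulr1; lra.
Qed.

End PayoffDecomposition.

Section Extinction.
Context {R : realType} {N : nat} {n : 'I_N -> nat}.
Variable U : forall k : 'I_N, pure_profile n -> R.
Variable h : forall k : 'I_N, 'rV[R]_(n k) -> R.
Variable Q : forall k : 'I_N, 'rV[R]_(n k) -> 'rV[R]_(n k).
Variable y : R -> profile R n.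
Hypothesis n_gt0 : forall l, (0 < n l)%N.
Hypothesis h_penalty : forall l, penalty (h l).
Hypothesis Q_choice : forall l (w : 'rV[R]_(n l)), is_choice (h l) w (Q l w).
Hypothesis y_dynamics : forall t : R, 0 < t -> forall l,
  is_derive t 1 (fun s => y s l) (payv U l (fun l' => Q l' (y t l'))).

Definition traj (t : R) : profile R n := fun l => Q l (y t l).

Lemma traj_mixed t l : mixed (traj t l).
Proof. by case: (Q_choice l (y t l)). Qed.

Definition vanishes {l} (i : 'I_(n l)) :=
  forall e : R, 0 < e -> \forall t \near +oo, traj t l 0 i < e.

Definition extinct {k} (p : 'rV[R]_(n k)) :=
  forall e : R, 0 < e -> \forall t \near +oo, exists2 a, p 0 a != 0 & traj t k 0 a < e.

Lemma outside_mass_vanishes (k : 'I_N) {S : forall l, pred 'I_(n l)} :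
  (forall l i, ~~ S l i -> vanishes i) ->
  forall e : R, 0 < e -> \forall t \near +oo, outside_mass k S (traj t) <= e.
Proof.
move=> S_vanish e e_gt0.
pose m := \sum_(l : 'I_N | l != k) (n l)%:R : R.
have m_ge0 : 0 <= m by apply: sumr_ge0 => *; exact: ler0n.
pose eps := e / (m + 1).
have eps_gt0 : 0 < eps by apply: divr_gt0; lra.
have : \forall t \near +oo, forall l (i : 'I_(n l)), traj t l 0 i * (~~ S l i)%:R <= eps.
  apply: filter_forall => l; apply: filter_forall => i.
  have [_|/S_vanish van] := boolP (S l i); first by near=> t; rewrite mulr0 ltW.
  by apply: filterS (van eps eps_gt0) => t /ltW; rewrite mulr1.
apply: filterS => t small.
apply: (@le_trans _ _ (m * eps)).
  rewrite /outside_mass /m mulr_suml; apply: ler_sum => l _.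
  apply: (@le_trans _ _ (\sum_(i < n l) eps)); first by apply: ler_sum => i _.
  by rewrite sumr_const card_ord mulr_natl.
have -> : e = (m + 1) * eps by rewrite /eps mulrC divfK //; lra.
by apply: ler_wpM2r; [exact: ltW | lra].
Unshelve. all: end_near.
Qed.

Lemma payoff_gap_eventually (k : 'I_N) r (p p' : 'rV[R]_(n k)) :
  (forall l i, ~ surv U r l i -> vanishes i) ->
  (forall b : pure_profile n, (forall l, l != k -> surv U r l (b l)) ->
     udev U p (pure_mixed b) < udev U p' (pure_mixed b)) ->
  exists2 d : R, 0 < d & \forall t \near +oo, d <= udev U (p' - p) (traj t).
Proof.
move=> nonsurv_vanish dom; set q := p' - p.
pose S l (i : 'I_(n l)) := `[< surv U r l i >].
pose survivor (b : pure_profile n) := [forall l, (l != k) ==> S l (b l)].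
have survivorP b : survivor b = `[< forall l, l != k -> surv U r l (b l) >].
  apply/forallP/asboolP => [Sb l lk|Sb l].
    by apply/asboolP; have := Sb l; rewrite lk.
  by apply/implyP => /Sb /asboolP.
pose d := \big[Order.min/1]_(b | survivor b) udev U q (pure_mixed b).
have d_gt0 : 0 < d.
  apply: lt_bigmin => // b; rewrite survivorP => /asboolP Sb.
  by rewrite /q udevB subr_gt0; exact: dom.
have d_le (b : pure_profile n) :
    (forall l, l != k -> S l (b l)) -> d <= udev U q (pure_mixed b).
  by move=> Sb; apply: bigmin_le_cond; apply/forallP => l; apply/implyP => /Sb.
pose C := \sum_(b : pure_profile n) `|udev U q (pure_mixed b)|.
have C_ge0 : 0 <= C by apply: sumr_ge0 => *.
have C_le (b : pure_profile n) : - C <= udev U q (pure_mixed b).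
  have : `|udev U q (pure_mixed b)| <= C.
    by rewrite /C (bigD1 b) //= lerDl; apply: sumr_ge0 => *.
  by have := ler_norm (- udev U q (pure_mixed b)); rewrite normrN; lra.
exists (d / 2); first by rewrite divr_gt0.
have S_vanish l i : ~~ S l i -> vanishes i by move/asboolPn; exact: nonsurv_vanish.
have eps_gt0 : 0 < d / (2 * (d + C)) by apply: divr_gt0; lra.
apply: filterS (outside_mass_vanishes k S_vanish _ eps_gt0) => t mass_le.
have := udev_ge_outside_mass U k (n_gt0 k) q (traj t) S d C (ltW d_gt0) C_ge0
  (fun l _ => traj_mixed t l) d_le C_le.
have : (d + C) * outside_mass k S (traj t) <= (d + C) * (d / (2 * (d + C))).
  by apply: ler_wpM2l; lra.
have -> : (d + C) * (d / (2 * (d + C))) = d / 2.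
  by field; apply/eqP; lra.
lra.
Qed.

Lemma extinct_of_dominated_on_survivors (k : 'I_N) r (p p' : 'rV[R]_(n k)) :
  (forall l i, ~ surv U r l i -> vanishes i) -> mixed p -> mixed p' ->
  (forall b : pure_profile n, (forall l, l != k -> surv U r l (b l)) ->
     udev U p (pure_mixed b) < udev U p' (pure_mixed b)) ->
  extinct p.
Proof.
move=> nonsurv_vanish mp mp' dom e e_gt0.
have [d d_gt0 gap] := payoff_gap_eventually k r p p' nonsurv_vanish dom.
have g_derive (s : R) : 0 < s ->
    is_derive s 1 (fun s => pairing (y s k) (p' - p)) (udev U (p' - p) (traj s)).
  by move=> s_gt0; rewrite -pairing_payv; exact: is_derive_pairing (y_dynamics s s_gt0 k).
have [M hM] := penalty_bounded (h k) (n_gt0 k) (h_penalty k).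
pose e' := Num.min e 1.
have e'_gt0 : 0 < e' by rewrite lt_min e_gt0 ltr01.
have [e'_le_e e'_le1] : e' <= e /\ e' <= 1 by rewrite !ge_min !lexx orbT.
apply: filterS (derivative_bounded_below_diverges g_derive d_gt0 gap
                  (2 * M * (1 + e'^-1))) => t g_big.
apply: contrapT => not_extinct.
have supp_ge a : p 0 a != 0 -> e' <= traj t k 0 a.
  by move=> pa; rewrite leNgt; apply/negP => lt_e'; apply: not_extinct;
     exists a => //; exact: lt_le_trans lt_e' e'_le_e.
have := choice_pairing_bound (Q_choice k (y t k)) mp mp' hM e'_gt0 e'_le1 supp_ge.
by rewrite -pairingB; lra.
Qed.

Lemma nonsurvivor_vanishes r : forall l i, ~ surv U r l i -> @vanishes l i.
Proof.
elim: r => [|r IHr] l i /=; first by [].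
move=> not_surv; have [surv_i|] := pselect (surv U r l i); last exact: IHr.
have [p' [[mp' _] dom]] : exists p', mixed_on (surv U r l) p' /\
    forall x : profile R n, (forall l', l' != l -> mixed_on (surv U r l') (x l')) ->
      udev U (delta_mx 0 i) x < udev U p' x.
  by apply: contrapT => undominated; apply: not_surv; split.
have extinct_i : extinct (delta_mx 0 i : 'rV[R]_(n l)).
  apply: (extinct_of_dominated_on_survivors l r _ p' IHr (mixed_delta i) mp').
  by move=> b surv_b; apply: dom => l' /surv_b; exact: mixed_on_delta.
move=> e e_gt0; apply: filterS (extinct_i e e_gt0) => t [a].
by rewrite delta_entry; case: (i =P a) => [<- //|_]; rewrite eqxx.
Qed.

Lemma extinct_of_dominated k (p : 'rV[R]_(n k)) :
  dominated U p \/ iter_dominated U p -> extinct p.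
Proof.
case=> [[mp [p' [mp' dom]]]|[r [[mp _] [p' [[mp' _] dom]]]]].
  apply: (@extinct_of_dominated_on_survivors k 0 p p') => //.
    by move=> l i /(_ Logic.I).
  by move=> b _; apply: dom => l _; exact: mixed_delta.
apply: (@extinct_of_dominated_on_survivors k r p p') => //.
  exact: nonsurvivor_vanishes.
by move=> b surv_b; apply: dom => l /surv_b; exact: mixed_on_delta.
Qed.

End Extinction.

Lemma supp_min_cvg0 (R : realType) m (p : 'rV[R]_m) (z : R -> 'rV[R]_m) :
  (forall t, mixed (z t)) ->
  (forall e : R, 0 < e -> \forall t \near +oo, exists2 a, p 0 a != 0 & z t 0 a < e) ->
  supp_min p (z t) @[t --> +oo] --> 0%E.
Proof.
move=> mz small P /= P0.
have /nbhs_ballP [e /= e_gt0 ball_P] : nbhs (0 : R) (fun r => P r%:E) := P0.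
apply: filterS (small e e_gt0) => t [a pa za].
have [i0 _ min_i0] := @eq_bigmin _ _ _ +oo%E a (fun i => p 0 i != 0)
  (fun i => (z t 0 i)%:E) pa (fun i _ => leey _).
have := @bigmin_le_cond _ _ _ +oo%E a (fun i => p 0 i != 0) (fun i => (z t 0 i)%:E) pa.
rewrite min_i0 lee_fin => le_a; rewrite /= /supp_min min_i0; apply: ball_P.
rewrite /ball /= sub0r normrN ger0_norm; last by case: (mz t).
exact: le_lt_trans le_a za.
Qed.

Theorem theorem4p1 (R : realType) (N : nat) (n : 'I_N -> nat)
  (U : forall k : 'I_N, pure_profile n -> R)
  (h : forall k : 'I_N, 'rV[R]_(n k) -> R)
  (Q : forall k : 'I_N, 'rV[R]_(n k) -> 'rV[R]_(n k))
  (y : R -> profile R n)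
  (k : 'I_N) (p : 'rV[R]_(n k)) :
  (forall l, (0 < n l)%N) ->
  (forall l, penalty (h l)) ->
  (forall l (w : 'rV[R]_(n l)), is_choice (h l) w (Q l w)) ->
  (forall t : R, 0 < t -> forall l,
     is_derive t 1 (fun s => y s l)
       (payv U l (fun l' => Q l' (y t l')))) ->
  (dominated U p \/ iter_dominated U p) ->
  supp_min p (Q k (y t k)) @[t --> +oo] --> 0%E.
Proof.
move=> n_gt0 h_penalty Q_choice y_dynamics p_dominated.
apply: supp_min_cvg0 => [t|]; first exact: (traj_mixed h Q y Q_choice t k).
exact: (extinct_of_dominated U h Q y n_gt0 h_penalty Q_choice y_dynamics k p p_dominated).
Qed.
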